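(* In $\mathcal H_{P,R}$ and $\mathcal H_{Fr}$, for every $n\ge1$: $$\tilde\Delta(v_n)=\sum_{k=1}^{n-1}\sum_{l>0}\binom{2n-2k+l-2}{l}\Big(\sum_{\substack{a_1+\cdots+a_l=k\\ a_i>0}}v_{a_1}\cdots v_{a_l}\Big)\otimes v_{n-k},$$ $$\tilde\Delta_{Fr}(v_n)=\sum_{k=1}^{n-1}\sum_{l>0}\binom{n-k+l-2}{l}\Big(\sum_{\substack{a_1+\cdots+a_l=k\\ a_i>0}}v_{a_1}\cdots v_{a_l}\Big)\otimes v_{n-k},$$ $$\tilde\Delta(u_n)=\sum_{k=1}^{n-1}\sum_{l>0}\binom{2n-2k+l}{l}\Big(\sum_{\substack{a_1+\cdots+a_l=k\\ a_i>0}}v_{a_1}\cdots v_{a_l}\Big)\otimes u_{n-k},$$ $$\tilde\Delta_{Fr}(u_n)=\sum_{k=1}^{n-1}\sum_{l>0}\binom{n-k+l}{l}\Big(\sum_{\substack{a_1+\cdots+a_l=k\\ a_i>0}}v_{a_1}\cdots v_{a_l}\Big)\otimes u_{n-k}.$$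
   Context: Planar rooted trees are finite trees with a root, embedded in the plane, edges oriented away from the root (undecorated). $\mathcal H_{P,R}$ is the free associative unital $\mathbb Q$-algebra on planar rooted trees; its basis is the set of planar forests $t_1\cdots t_n$ ($1$ = empty forest), and the weight of a forest is its number of vertices. Its coproduct is $\Delta(F)=\sum_cP^c(F)\otimes R^c(F)$ over tuples $c=(c_i)$ where each $c_i$ is the empty cut of $t_i$ ($P=1,R=t_i$), the total cut ($P=t_i,R=1$), or an admissible cut of $t_i$ (a nonempty set of edges such that every oriented path meets at most one of them; $R^{c_i}(t_i)$ is the component of the root, $P^{c_i}(t_i)$ the left-to-right planar forest of the other components), $P^c(F)=\prod P^{c_i}(t_i)$, $R^c(F)=\prod R^{c_i}(t_i)$. $\mathcal H_{Fr}$ is the same algebra with coproduct $\Delta_{Fr}(F)=\sum_cP^c(F)\otimes R^c(F)$ where each $c_i$ is the empty cut, the total cut, or an admissible cut of $t_i$ containing no left edge (an edge is left if it is the leftmost among the edges with the same origin). For a coproduct $\delta$, $\tilde\delta(x)=\delta(x)-x\otimes1-1\otimes x$. For $n\ge1$, $u_n$ is the sum of all planar forests of weight $n$ and $v_n$ the sum of all planar rooted trees of weight $n$. *)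

From HB Require Import structures.
From mathcomp Require Import all_boot all_order all_algebra.
Set Implicit Arguments. Unset Strict Implicit. Unset Printing Implicit Defensive.
Import GRing.Theory Num.Theory.
Local Open Scope ring_scope.

Inductive tree := Node of seq tree.

Fixpoint encode (t : tree) : GenTree.tree nat :=
  match t with Node f => GenTree.Node 0 (map encode f) end.
Fixpoint decode (g : GenTree.tree nat) : tree :=
  match g with
  | GenTree.Leaf _ => Node [::]
  | GenTree.Node _ l => Node (map decode l)
  end.
Fixpoint codeK (t : tree) : decode (encode t) = t :=
  match t return decode (encode t) = t with
  | Node f => f_equal Node
      ((fix aux (f : seq tree) : map decode (map encode f) = f :=
          match f return map decode (map encode f) = f with
          | [::] => erefl
          | a :: f' => f_equal2 cons (codeK a) (aux f')
          end) f)
  end.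
HB.instance Definition _ := Countable.copy tree (can_type codeK).

(** Planar forests (the basis of H): words of trees; [::] is the empty forest 1. *)
Definition forest := seq tree.

Fixpoint tweight (t : tree) : nat :=
  match t with Node f => (sumn (map tweight f)).+1 end.
Definition fweight (F : forest) : nat := sumn (map tweight F).

(** Enumeration of all planar forests of weight n (fuel-based recursion;
    first tree has k.+1 vertices, its children forest has weight k). *)
Fixpoint forests_fuel (fuel n : nat) : seq forest :=
  match n with
  | 0 => [:: [::]]
  | _ => match fuel with
         | 0 => [::]
         | fuel'.+1 =>
           flatten [seq [seq Node f :: g | f <- forests_fuel fuel' k,
                                            g <- forests_fuel fuel' (n - k.+1)]
                   | k <- iota 0 n]
         end
  end.
Definition forests_of (n : nat) : seq forest := forests_fuel n n.
Definition trees_of (n : nat) : seq tree :=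
  match n with 0 => [::] | m.+1 => [seq Node f | f <- forests_of m] end.

(** Elements of H: finite formal Q-linear combinations of forests. *)
Definition hsum := seq (rat * forest).
(** Elements of H (x) H: finite formal combinations of pairs of forests. *)
Definition tsum := seq (rat * forest * forest).

Definition hone : hsum := [:: (1, [::])].
Definition hmul (x y : hsum) : hsum :=
  [seq (a.1 * b.1, a.2 ++ b.2) | a <- x, b <- y].
Definition hprod (xs : seq hsum) : hsum := foldr hmul hone xs.

Definition tens (x y : hsum) : tsum :=
  [seq (a.1 * b.1, a.2, b.2) | a <- x, b <- y].
Definition tscale (c : rat) (s : tsum) : tsum :=
  [seq (c * e.1.1, e.1.2, e.2) | e <- s].
Definition topp (s : tsum) : tsum := tscale (-1) s.
Definition tcoef (s : tsum) (P R : forest) : rat :=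
  \sum_(e <- s | (e.1.2 == P) && (e.2 == R)) e.1.1.
Definition teq (s1 s2 : tsum) : Prop := forall P R, tcoef s1 P R = tcoef s2 P R.

Fixpoint prod_choices (ls : seq (seq (forest * forest))) : seq (forest * forest) :=
  match ls with
  | [::] => [:: ([::], [::])]
  | l :: ls' => [seq (p.1 ++ q.1, p.2 ++ q.2) | p <- l, q <- prod_choices ls']
  end.

(** Empty or admissible cuts of a tree, as the list (with multiplicity) of pairs
    (P^c(t), R^c(t)).  For each edge from the root to a child c: either the edge
    is cut (c goes entirely into P, nothing below may be cut), or it is not and a
    cut of c is chosen recursively. *)
Fixpoint cutsPR (t : tree) : seq (forest * tree) :=
  match t with
  | Node f =>
    [seq (p.1, Node p.2) |
       p <- prod_choices
              (map (fun c => ([:: c], [::]) ::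
                              [seq (q.1, [:: q.2]) | q <- cutsPR c]) f)]
  end.

(** Same, but left edges (edge to the first child) may not be cut. *)
Fixpoint cutsFr (t : tree) : seq (forest * tree) :=
  match t with
  | Node [::] => [:: ([::], Node [::])]
  | Node (c0 :: f) =>
    [seq (p.1, Node p.2) |
       p <- prod_choices
              ([seq (q.1, [:: q.2]) | q <- cutsFr c0] ::
               map (fun c => ([:: c], [::]) ::
                              [seq (q.1, [:: q.2]) | q <- cutsFr c]) f)]
  end.

(** For a tree: the total cut (t, 1) together with the empty/admissible cuts. *)
Definition tree_opts (cuts : tree -> seq (forest * tree)) (t : tree)
  : seq (forest * forest) :=
  ([:: t], [::]) :: [seq (q.1, [:: q.2]) | q <- cuts t].

Definition delta_forest (cuts : tree -> seq (forest * tree)) (F : forest)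
  : seq (forest * forest) :=
  prod_choices (map (tree_opts cuts) F).

Definition delta (cuts : tree -> seq (forest * tree)) (x : hsum) : tsum :=
  flatten [seq [seq (a.1, p.1, p.2) | p <- delta_forest cuts a.2] | a <- x].
Definition rdelta (cuts : tree -> seq (forest * tree)) (x : hsum) : tsum :=
  delta cuts x ++ topp (tens x hone) ++ topp (tens hone x).

Definition vv (n : nat) : hsum := [seq (1, [:: t]) | t <- trees_of n].
Definition uu (n : nat) : hsum := [seq (1, F) | F <- forests_of n].

Fixpoint comps (k l : nat) : seq (seq nat) :=
  match l with
  | 0 => if k == 0 then [:: [::]] else [::]
  | l'.+1 => flatten [seq [seq a :: c | c <- comps (k - a) l'] | a <- iota 1 k]
  end.

Definition comp_sum (k l : nat) : hsum :=
  flatten [seq hprod (map vv a) | a <- comps k l].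

(** sum_{k=1}^{n-1} sum_{l>0} c(n,k,l) (comp_sum k l) (x) w_{n-k};
    terms with l > k vanish (no compositions), so l ranges over 1..k. *)
Definition rhs (c : nat -> nat -> nat -> nat) (w : nat -> hsum) (n : nat) : tsum :=
  flatten [seq flatten [seq tscale (c n k l)%:R (tens (comp_sum k l) (w (n - k)%N))
                       | l <- iota 1 k]
          | k <- iota 1 (n - 1)%N].

From mathcomp Require Import all_boot all_algebra zify ring.
Set Implicit Arguments. Unset Strict Implicit. Unset Printing Implicit Defensive.
Import GRing.Theory.

(* Every coefficient of P (x) R in Delta(u_n) and Delta(v_n) is a number of cuts, so the
   theorem is a statement about counting.  Splitting a forest into its first tree and the
   rest gives a recursion on the weight, which is solved in closed form: the cuts of the
   forests of weight n with pruned part P (of l trees) and trunk R (of weight w) number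
   multichoose (a w + 1) l, and those of the trees with a trunk of weight w number
   multichoose (a w - 1) l, where a = 2 for admissible cuts and a = 1 for cuts avoiding
   left edges.  These count the order-preserving ways of grafting the l trees of P on the
   a w +- 1 available positions of R.  Both closed forms are proved together by induction
   on n, through Pascal's rule and Vandermonde's convolution for multiset coefficients;
   the binomials of the statement are these multiset coefficients. *)

(** * Counting in lists *)

Lemma count_memE (T : eqType) (x : T) s : count_mem x s = \sum_(y <- s) (y == x).
Proof. by elim: s => [|y s IH]; rewrite ?big_nil ?big_cons //= IH. Qed.

Lemma count_mem_flatten_map (I : Type) (T : eqType) (f : I -> seq T) s x :
  count_mem x (flatten (map f s)) = \sum_(a <- s) count_mem x (f a).
Proof. by rewrite !count_memE big_flatten big_map; apply: eq_bigr => a _; rewrite count_memE. Qed.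

Lemma count_mem_map_inj (T U : eqType) (f : T -> U) s x :
  injective f -> count_mem (f x) (map f s) = count_mem x s.
Proof. by move=> f_inj; rewrite count_map; apply: eq_count => y /=; rewrite inj_eq. Qed.

Lemma sum_iota_pick (V : nmodType) m n i (F : nat -> V) :
  (\sum_(j <- iota m n) (if j == i then F j else 0) =
   if (m <= i < m + n)%N then F i else 0)%R.
Proof.
rewrite -big_mkcond -mem_iota; case: ifP => [i_in|i_notin].
  by rewrite -big_filter filter_pred1_uniq ?iota_uniq // big_seq1.
by rewrite big_seq_cond big1 // => j /andP [j_in /eqP eq_ji]; rewrite -eq_ji j_in in i_notin.
Qed.

Lemma exchange_big2 (I J K L : Type) (s1 : seq I) (s2 : seq J) (r1 : seq K) (r2 : seq L)
    (F : I -> J -> K -> L -> nat) :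
  \sum_(a <- s1) \sum_(b <- s2) \sum_(i <- r1) \sum_(j <- r2) F a b i j =
  \sum_(i <- r1) \sum_(j <- r2) \sum_(a <- s1) \sum_(b <- s2) F a b i j.
Proof.
under eq_bigr => a _ do rewrite exchange_big.
under eq_bigr => a _ do under eq_bigr => i _ do rewrite exchange_big.
by rewrite exchange_big; under eq_bigr => i _ do rewrite exchange_big.
Qed.

Lemma sum_split_weight n a b c : 0 < a ->
  \sum_(k < n.+1) (a == k.+1) * ((b == n - k) * c) = (a + b == n.+1) * c.
Proof.
case: a => // a _; rewrite -(big_mkord xpredT (fun k => (a.+1 == k.+1) * ((b == n - k) * c))).
rewrite (eq_bigr (fun k => if k == a then (b == n - k) * c else 0)) => [|k _]; last first.
  by rewrite eqSS [a == k]eq_sym; case: (k == a); rewrite ?mul1n.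
rewrite sum_iota_pick add0n ltnS addSn eqSS.
have [le_an|lt_na] := leqP a n; last by rewrite (_ : a + b == n = false) //; apply/eqP; lia.
by rewrite (_ : (b == n - a) = (a + b == n)) //; apply/eqP/eqP; lia.
Qed.

Lemma addn_eq_split n w x X Y : 0 < x -> (w + x = n -> X = Y) ->
  (w + x == n) * X = (w < n) * Y * (x == n - w).
Proof.
move=> x_gt0 XY; have [eq_n|neq_n] := eqVneq (w + x) n.
  have lt_w : w < n by rewrite -eq_n -{1}[w]addn0 ltn_add2l.
  by rewrite XY // lt_w -eq_n addKn eqxx muln1.
rewrite mul0n; case: ltnP => lt_w //=; rewrite (_ : (x == n - w) = false) ?muln0 //.
by apply: contraNF neq_n => /eqP ->; rewrite subnKC // ltnW.
Qed.

Section CatPairs.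
Variable T : eqType.
Implicit Types (s x y : seq T) (L : seq (seq T * seq T)).

Definition catpairs L1 L2 := [seq (p.1 ++ q.1, p.2 ++ q.2) | p <- L1, q <- L2].

Lemma eq_cat_sum x y s :
  (x ++ y == s) = \sum_(i < (size s).+1) ((x == take i s) && (y == drop i s)) :> nat.
Proof.
have [<-|neq_s] := eqVneq (x ++ y) s; last first.
  rewrite big1 // => i _; apply/eqP; rewrite eqb0.
  by apply: (contra_neqN _ neq_s) => /andP [/eqP -> /eqP ->]; rewrite cat_take_drop.
have lt_x : size x < (size (x ++ y)).+1 by rewrite size_cat ltnS leq_addr.
rewrite (bigD1 (Ordinal lt_x)) //= take_size_cat // drop_size_cat // !eqxx big1 //.
move=> i neq_i; apply/eqP; rewrite eqb0; apply: (contra_neqN _ neq_i) => /andP [/eqP x_eq _].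
apply: val_inj => /=; have -> : size x = size (take i (x ++ y)) by rewrite -x_eq.
rewrite size_take; move: (ltn_ord i); rewrite ltnS leq_eqVlt.
by case/orP => [/eqP ->|->]; rewrite ?ltnn.
Qed.

Lemma count_mem_catpairs L1 L2 P R :
  count_mem (P, R) (catpairs L1 L2) =
  \sum_(i < (size P).+1) \sum_(j < (size R).+1)
     count_mem (take i P, take j R) L1 * count_mem (drop i P, drop j R) L2.
Proof.
have split_eq (p q : seq T * seq T) : ((p.1 ++ q.1, p.2 ++ q.2) == (P, R)) =
  \sum_(i < (size P).+1) \sum_(j < (size R).+1)
     ((p == (take i P, take j R)) * (q == (drop i P, drop j R))) :> nat.
  case: p q => [p1 p2] [q1 q2]; rewrite xpair_eqE -mulnb !eq_cat_sum big_distrl.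
  apply: eq_bigr => i _ /=.
  rewrite big_distrr; apply: eq_bigr => j _ /=; rewrite !xpair_eqE !mulnb.
  by case: eqP; case: eqP; case: eqP; case: eqP.
rewrite count_mem_flatten_map.
under eq_bigr => p _ do rewrite count_memE big_map.
under eq_bigr => p _ do under eq_bigr => q _ do rewrite split_eq.
rewrite exchange_big2; apply: eq_bigr => i _; apply: eq_bigr => j _.
by rewrite !count_memE big_distrlr.
Qed.

Lemma count_mem_flatten_catpairs (A B : Type) (s1 : seq A) (s2 : seq B) f g P R :
  \sum_(a <- s1) \sum_(b <- s2) count_mem (P, R) (catpairs (f a) (g b)) =
  \sum_(i < (size P).+1) \sum_(j < (size R).+1)
     count_mem (take i P, take j R) (flatten (map f s1)) *
     count_mem (drop i P, drop j R) (flatten (map g s2)).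
Proof.
under eq_bigr => a _ do under eq_bigr => b _ do rewrite count_mem_catpairs.
rewrite exchange_big2; apply: eq_bigr => i _; apply: eq_bigr => j _.
by rewrite !count_mem_flatten_map big_distrlr.
Qed.

Lemma sum_take_drop_le1 s (f g : seq T -> nat) :
  (forall a b s', f [:: a, b & s'] = 0) ->
  \sum_(j < (size s).+1) f (take j s) * g (drop j s) =
  f [::] * g s + (if s is a :: s' then f [:: a] * g s' else 0).
Proof.
move=> f_small; case: s => [|a s]; first by rewrite big_ord1 addn0.
rewrite big_ord_recl big_ord_recl /= !take0 drop0 big1 ?addn0 // => j _.
by case: s j => [[]|b s j] //=; rewrite f_small.
Qed.

Lemma catpairs1 L : catpairs L [:: ([::], [::])] = L.
Proof. by rewrite /catpairs; elim: L => //= -[x y] L ->; rewrite !cats0. Qed.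

End CatPairs.

(** * Planar forests by weight *)

Lemma Node_inj : injective Node. Proof. by move=> f g []. Qed.

Lemma tweight_gt0 t : 0 < tweight t. Proof. by case: t. Qed.

Lemma tweight_Node f : tweight (Node f) = (fweight f).+1. Proof. by []. Qed.

Lemma fweight_cons t F : fweight (t :: F) = tweight t + fweight F. Proof. by []. Qed.

Lemma fweight_cat F G : fweight (F ++ G) = fweight F + fweight G.
Proof. by rewrite /fweight map_cat sumn_cat. Qed.

Lemma fweight_eq0 F : (fweight F == 0) = (F == [::]).
Proof. by case: F => [|t F] //; rewrite fweight_cons addn_eq0 eqn0Ngt tweight_gt0. Qed.

Lemma size_le_fweight F : size F <= fweight F.
Proof. by elim: F => [|t F IH] //=; rewrite fweight_cons -add1n leq_add ?tweight_gt0. Qed.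

Lemma forests_fuelS fuel n : forests_fuel fuel.+1 n.+1 =
  flatten [seq [seq Node f :: g | f <- forests_fuel fuel k, g <- forests_fuel fuel (n.+1 - k.+1)]
          | k <- iota 0 n.+1].
Proof. by []. Qed.

Lemma forests_fuel_stable fuel n : n <= fuel -> forests_fuel fuel.+1 n = forests_fuel fuel n.
Proof.
elim: fuel n => [|fuel IH] [|n] // le_n_fuel; rewrite forests_fuelS [RHS]forests_fuelS.
congr flatten; apply/eq_in_map => k; rewrite mem_iota add0n => /andP [_ lt_k].
by rewrite !IH //; lia.
Qed.

Lemma forests_fuel_enough fuel n : n <= fuel -> forests_fuel fuel n = forests_of n.
Proof.
move=> le_n_fuel; rewrite /forests_of -(subnKC le_n_fuel).
by elim: (fuel - n) => [|d IH]; rewrite ?addn0 // addnS forests_fuel_stable ?leq_addr.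
Qed.

Lemma forests_ofS n : forests_of n.+1 =
  flatten [seq [seq Node f :: g | f <- forests_of k, g <- forests_of (n - k)] | k <- iota 0 n.+1].
Proof.
rewrite /forests_of forests_fuelS; congr flatten; apply/eq_in_map => k.
by rewrite mem_iota add0n subSS => /andP [_ lt_k]; rewrite !forests_fuel_enough //; lia.
Qed.

Lemma sum_forests_S (K : forest -> nat) n :
  \sum_(F <- forests_of n.+1) K F =
  \sum_(k < n.+1) \sum_(t <- trees_of k.+1) \sum_(g <- forests_of (n - k)) K (t :: g).
Proof.
rewrite forests_ofS big_flatten big_map -[iota 0 n.+1]/(index_iota 0 n.+1) big_mkord.
by apply: eq_bigr => k _; rewrite big_flatten /= !big_map; apply: eq_bigr => f _; rewrite big_map.
Qed.

Lemma count_mem_forests n F : count_mem F (forests_of n) = (fweight F == n).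
Proof.
elim/ltn_ind: n F => [[|n]] IH F.
  by rewrite /forests_of /= addn0 eq_sym fweight_eq0.
rewrite count_memE sum_forests_S; case: F => [|[h] G].
  by rewrite big1 // => k _; rewrite big1 // => t _; rewrite big1.
rewrite fweight_cons -[RHS]muln1 -sum_split_weight ?tweight_gt0 //; apply: eq_bigr => k _.
transitivity (count_mem (Node h) (trees_of k.+1) * count_mem G (forests_of (n - k))).
  rewrite !count_memE big_distrlr; apply: eq_bigr => t _; apply: eq_bigr => g _.
  by rewrite /= eqseq_cons mulnb.
rewrite count_mem_map_inj; last exact: Node_inj.
by rewrite IH // IH ?ltnS ?leq_subr //= eqSS muln1.
Qed.

Definition tree_of_weight m (F : forest) := if F is [:: t] then tweight t == m else false.

Lemma count_mem_trees m t : count_mem t (trees_of m) = (tweight t == m).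
Proof.
case: m => [|m]; first by rewrite eqn0Ngt tweight_gt0.
by case: t => f; rewrite count_mem_map_inj ?count_mem_forests //; exact: Node_inj.
Qed.

Lemma count_mem_comps k l a :
  count_mem a (comps k l) = [&& size a == l, sumn a == k & all (fun x => 0 < x) a].
Proof.
elim: l k a => [|l IH] k [|a0 a] //=; first by case: k.
- by case: k.
- by rewrite count_mem_flatten_map big1 // => x _; rewrite count_memE big_map big1.
rewrite count_mem_flatten_map.
rewrite (eq_bigr (fun x => if x == a0 then count_mem a (comps (k - a0) l) else 0)); last first.
  move=> x _; rewrite count_memE big_map; case: eqP => [->|/eqP neq_x].
    by rewrite count_memE; apply: eq_bigr => c _; rewrite eqseq_cons eqxx.
  by rewrite big1 // => c _; rewrite eqseq_cons (negbTE neq_x).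
rewrite sum_iota_pick IH eqSS; case: ifP => [/andP [pos_a0 lt_a0]|out].
  by rewrite pos_a0 (_ : (sumn a == k - a0) = (a0 + sumn a == k)) //; apply/eqP/eqP; lia.
apply/esym/eqP; rewrite eqb0; apply: contraFN out => /and4P [_ /eqP <- -> _] /=; lia.
Qed.

(** * Multiset coefficients *)

(* The truncated subtraction makes [multichoose 0 l] equal to [l == 0], as it should be. *)
Definition multichoose s l := 'C(s + l - 1, l).

Lemma multichoosen0 s : multichoose s 0 = 1.
Proof. exact: bin0. Qed.

Lemma multichoose0S l : multichoose 0 l.+1 = 0.
Proof. by rewrite /multichoose add0n subn1 bin_small. Qed.

Lemma multichoose1n l : multichoose 1 l = 1.
Proof. by rewrite /multichoose add1n subn1 binn. Qed.

Lemma multichooseS s l : multichoose s.+1 l.+1 = multichoose s.+1 l + multichoose s l.+1.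
Proof. by rewrite /multichoose addnS !addSn !subn1 /= binS addnC addnS. Qed.

Lemma multichoose_conv a b l :
  \sum_(i < l.+1) multichoose a i * multichoose b (l - i) = multichoose (a + b) l.
Proof.
elim: a l => [|a IHa] l.
  rewrite big_ord_recl multichoosen0 mul1n subn0 big1 ?addn0 // => i _.
  by rewrite multichoose0S.
elim: l => [|l IHl]; first by rewrite big_ord1 !multichoosen0.
rewrite big_ord_recl multichoosen0 mul1n subn0.
under eq_bigr => i _ do rewrite /bump /= ?add1n subSS multichooseS mulnDl.
rewrite big_split /= IHl addnA [multichoose b l.+1 + _]addnC -addnA.
have IHa' : multichoose b l.+1 + \sum_(i < l.+1) multichoose a i.+1 * multichoose b (l - i) =
             multichoose (a + b) l.+1.
  by rewrite -IHa [RHS]big_ord_recl multichoosen0 mul1n subn0.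
by rewrite IHa' addSn multichooseS.
Qed.

(** * Counting cuts *)

Section CutCounting.
Variable cuts : tree -> seq (forest * tree).

Definition lift_cuts t : seq (forest * forest) := [seq (q.1, [:: q.2]) | q <- cuts t].

Definition ncuts m P r := count_mem (P, r) (flatten [seq cuts t | t <- trees_of m]).

Definition ndelta n P R :=
  count_mem (P, R) (flatten [seq delta_forest cuts F | F <- forests_of n]).

Lemma count_mem_lift_cuts t P R :
  count_mem (P, R) (lift_cuts t) = if R is [:: r] then count_mem (P, r) (cuts t) else 0.
Proof.
case: R => [|r [|r' R]]; rewrite count_memE big_map.
- by rewrite big1 // => q _; rewrite xpair_eqE andbF.
- by rewrite count_memE; apply: eq_bigr => -[Q s] _; rewrite !xpair_eqE eqseq_cons andbT.
- by rewrite big1 // => q _; rewrite xpair_eqE eqseq_cons /= !andbF.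
Qed.

Lemma ncuts_lift m P R :
  count_mem (P, R) (flatten [seq lift_cuts t | t <- trees_of m]) =
  if R is [:: r] then ncuts m P r else 0.
Proof.
rewrite count_mem_flatten_map; under eq_bigr => t _ do rewrite count_mem_lift_cuts.
by case: R => [|r [|r' R]]; rewrite ?/ncuts ?count_mem_flatten_map // big1.
Qed.

Lemma ncuts_tree_opts m P R :
  count_mem (P, R) (flatten [seq tree_opts cuts t | t <- trees_of m]) =
  ((R == [::]) && tree_of_weight m P) +
  (if R is [:: r] then ncuts m P r else 0).
Proof.
rewrite -ncuts_lift !count_mem_flatten_map.
transitivity ((R == [::]) * \sum_(t <- trees_of m) (P == [:: t]) +
              \sum_(t <- trees_of m) count_mem (P, R) (lift_cuts t)).
  rewrite big_distrr -big_split; apply: eq_bigr => t _ /=.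
  by rewrite xpair_eqE mulnb andbC eq_sym [[:: t] == P]eq_sym.
rewrite -mulnb; congr (_ * _ + _); case: P => [|t0 [|t1 P]].
- by rewrite big1.
- by rewrite -count_mem_trees count_memE; apply: eq_bigr => t _; rewrite eqseq_cons andbT eq_sym.
- by rewrite big1 // => t _; rewrite eqseq_cons andbC.
Qed.

Lemma delta_forest_cons t F :
  delta_forest cuts (t :: F) = catpairs (tree_opts cuts t) (delta_forest cuts F).
Proof. by []. Qed.

Lemma delta_forest1 t : delta_forest cuts [:: t] = tree_opts cuts t.
Proof. exact: (catpairs1 (tree_opts cuts t)). Qed.

Lemma ndelta0 P R : ndelta 0 P R = (P == [::]) && (R == [::]).
Proof. by rewrite /ndelta /= addn0 xpair_eqE ![[::] == _]eq_sym. Qed.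

(* The first tree of the forest is either cut totally, and then starts [P], or cut
   admissibly, and then its trunk is the first tree of [R]. *)
Lemma ndelta_S n P R : ndelta n.+1 P R = \sum_(k < n.+1)
  ((if P is t :: P' then (tweight t == k.+1) * ndelta (n - k) P' R else 0) +
   (if R is r :: R' then
      \sum_(i < (size P).+1) ncuts k.+1 (take i P) r * ndelta (n - k) (drop i P) R'
    else 0)).
Proof.
rewrite /ndelta count_mem_flatten_map sum_forests_S; apply: eq_bigr => k _.
under eq_bigr => t _ do under eq_bigr => g _ do rewrite delta_forest_cons.
rewrite count_mem_flatten_catpairs -/(ndelta _ _ _).
pose nopts X U := count_mem (X, U) (flatten [seq tree_opts cuts t | t <- trees_of k.+1]).
have nopts_long X a b s : nopts X [:: a, b & s] = 0.
  by rewrite /nopts ncuts_tree_opts; case: X => [|? []].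
under eq_bigr => i _ do
  rewrite (@sum_take_drop_le1 _ _ (nopts (take i P)) (ndelta (n - k) (drop i P))) //.
rewrite big_split /=; congr (_ + _).
  rewrite (@sum_take_drop_le1 _ _ (nopts ^~ [::]) (ndelta (n - k) ^~ R)) => [|a b s].
    by case: P => [|t P]; rewrite /nopts ?ncuts_tree_opts /= ?mul0n ?add0n ?addn0.
  by rewrite /nopts ncuts_tree_opts.
case: R => [|r R]; first by rewrite big1.
by apply: eq_bigr => i _; rewrite /nopts ncuts_tree_opts; case: (take i P) => [|? []].
Qed.

End CutCounting.

Section ClosedForms.
Variables (cuts : tree -> seq (forest * tree)) (a : nat).
Hypothesis a_gt0 : 0 < a.

Definition ndelta_closed n := forall m P R, m <= n ->
  ndelta cuts m P R = (fweight P + fweight R == m) * multichoose (a * fweight R).+1 (size P).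

Definition ncuts_closed n := forall m P r, m < n ->
  ncuts cuts m.+1 P r = (fweight P + tweight r == m.+1) * multichoose (a * tweight r).-1 (size P).

Lemma ndelta_closed0 : ndelta_closed 0.
Proof.
move=> m P R; rewrite leqn0 => /eqP ->; rewrite ndelta0 addn_eq0 !fweight_eq0.
by case: P => [|t P]; rewrite ?andbF // multichoosen0 muln1.
Qed.

Lemma sum_ncuts_ndelta n P u V : ndelta_closed n -> ncuts_closed n.+1 ->
  \sum_(k < n.+1) \sum_(i < (size P).+1)
     ncuts cuts k.+1 (take i P) u * ndelta cuts (n - k) (drop i P) V =
  (fweight P + fweight (u :: V) == n.+1) * multichoose (a * fweight (u :: V)) (size P).
Proof.
move=> closed_delta closed_cuts; rewrite exchange_big /=.
have a_u_gt0 : 0 < a * tweight u by rewrite muln_gt0 a_gt0 tweight_gt0.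
have -> : a * fweight (u :: V) = (a * tweight u).-1 + (a * fweight V).+1.
  by rewrite fweight_cons mulnDr addnS -addSn prednK.
rewrite -multichoose_conv big_distrr; apply: eq_bigr => i _ /=.
have le_iP : i <= size P by rewrite -ltnS.
rewrite -[P in fweight P](cat_take_drop i) fweight_cat fweight_cons addnACA.
rewrite -[RHS](@sum_split_weight n (fweight (take i P) + tweight u)); last first.
  by rewrite addn_gt0 tweight_gt0 orbT.
apply: eq_bigr => k _; rewrite closed_cuts // closed_delta ?leq_subr //.
by rewrite size_takel // size_drop; ring.
Qed.

Lemma ndelta_closedS n : ndelta_closed n -> ncuts_closed n.+1 -> ndelta_closed n.+1.
Proof.
move=> closed_delta closed_cuts m P R; rewrite leq_eqVlt ltnS => /orP [/eqP ->|]; last first.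
  exact: closed_delta.
have total_cut_part Q : \sum_(k < n.+1)
    (if Q is t :: Q' then (tweight t == k.+1) * ndelta cuts (n - k) Q' R else 0) =
    if Q is _ :: Q' then
      (fweight Q + fweight R == n.+1) * multichoose (a * fweight R).+1 (size Q')
    else 0.
  case: Q => [|t Q]; first by rewrite big1.
  rewrite fweight_cons -addnA -sum_split_weight ?tweight_gt0 //; apply: eq_bigr => k _.
  by rewrite closed_delta ?leq_subr.
have trunk_part S : \sum_(k < n.+1)
    (if S is r :: S' then
       \sum_(i < (size P).+1) ncuts cuts k.+1 (take i P) r * ndelta cuts (n - k) (drop i P) S'
     else 0) =
    if S is _ :: _ then (fweight P + fweight S == n.+1) * multichoose (a * fweight S) (size P)
    else 0.
  by case: S => [|r S]; [rewrite big1 | exact: sum_ncuts_ndelta].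
rewrite ndelta_S big_split /= {}total_cut_part {}trunk_part.
case: P => [|t P]; case: R => [|r R] //=; rewrite ?multichoosen0 ?muln0 ?addn0 ?add0n //.
  by rewrite !multichoose1n.
by rewrite -mulnDr -multichooseS.
Qed.

End ClosedForms.

Lemma count_mem_map_Node (L : seq (forest * forest)) P f :
  count_mem (P, Node f) [seq (p.1, Node p.2) | p <- L] = count_mem (P, f) L.
Proof.
by rewrite count_map; apply: eq_count => -[Q g]; rewrite /= !xpair_eqE (inj_eq Node_inj).
Qed.

Lemma ncutsPR_Node m P f : ncuts cutsPR m.+1 P (Node f) = ndelta cutsPR m P f.
Proof.
rewrite /ncuts count_mem_flatten_map big_map /ndelta count_mem_flatten_map.
by apply: eq_bigr => g _; rewrite count_mem_map_Node.
Qed.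

Lemma ncutsPR_closed n : ndelta_closed cutsPR 2 n -> ncuts_closed cutsPR 2 n.+1.
Proof.
move=> closed_delta m P [f] lt_m; rewrite ncutsPR_Node closed_delta //.
by rewrite tweight_Node addnS eqSS mulnS addSn /= add1n.
Qed.

Lemma ndeltaPR_closed n : ndelta_closed cutsPR 2 n.
Proof.
elim: n => [|n IH]; first exact: ndelta_closed0.
exact: ndelta_closedS (ncutsPR_closed IH).
Qed.

Lemma cutsFr_cons c f : cutsFr (Node (c :: f)) =
  [seq (p.1, Node p.2) | p <- catpairs (lift_cuts cutsFr c) (delta_forest cutsFr f)].
Proof. by []. Qed.

Lemma ncutsFr_1 P r : ncuts cutsFr 1 P r = (P == [::]) && (r == Node [::]).
Proof. by rewrite /ncuts /= addn0 xpair_eqE ![[::] == _]eq_sym [Node _ == _]eq_sym. Qed.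

(* The edge to the first child of the root is never cut, so the trunk keeps that child,
   pruned by a cut of its own. *)
Lemma ncutsFr_SS m P h : ncuts cutsFr m.+2 P (Node h) =
  if h is u :: V then
    \sum_(k < m.+1) \sum_(i < (size P).+1)
       ncuts cutsFr k.+1 (take i P) u * ndelta cutsFr (m - k) (drop i P) V
  else 0.
Proof.
rewrite {1}/ncuts count_mem_flatten_map big_map sum_forests_S.
under eq_bigr => k _ do under eq_bigr => c _ do under eq_bigr => g _ do
  rewrite cutsFr_cons count_mem_map_Node.
under eq_bigr => k _ do rewrite count_mem_flatten_catpairs -/(ndelta _ _ _).
under eq_bigr => k _ do under eq_bigr => i _ do under eq_bigr => j _ do rewrite ncuts_lift.
case: h => [|u V].
  by rewrite big1 // => k _; rewrite big1 // => i _; rewrite big_ord1.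
apply: eq_bigr => k _; apply: eq_bigr => i _.
by rewrite (@sum_take_drop_le1 _ _
  (fun U => if U is [:: r] then ncuts cutsFr k.+1 (take i P) r else 0)
  (ndelta cutsFr (m - k) (drop i P))).
Qed.

Lemma ncutsFr_closedS n :
  ndelta_closed cutsFr 1 n -> ncuts_closed cutsFr 1 n.+1 -> ncuts_closed cutsFr 1 n.+2.
Proof.
move=> closed_delta closed_cuts m P [h]; rewrite ltnS leq_eqVlt => /orP [/eqP ->|]; last first.
  exact: closed_cuts.
rewrite ncutsFr_SS; case: h => [|u V]; first by case: P => [|t P]; rewrite ?multichoose0S ?muln0.
by rewrite (sum_ncuts_ndelta (a := 1)) // tweight_Node addnS eqSS !mul1n.
Qed.

Lemma ndeltaFr_closed n : ndelta_closed cutsFr 1 n /\ ncuts_closed cutsFr 1 n.+1.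
Proof.
elim: n => [|n [closed_delta closed_cuts]]; last first.
  by split; [exact: ndelta_closedS | exact: ncutsFr_closedS].
split; first exact: ndelta_closed0.
case=> // P [f] _; rewrite ncutsFr_1 tweight_Node addnS eqSS mul1n /=.
case: P => [|t P]; first by rewrite add0n (inj_eq Node_inj) fweight_eq0 multichoosen0 muln1.
by rewrite addn_eq0 fweight_eq0.
Qed.

Lemma tree_opts_split cuts a c n : ncuts_closed cuts a n.+1 ->
  (forall k l, 0 < l -> k < n.+1 -> multichoose (a * (n.+1 - k)).-1 l = c n.+1 k l) ->
  forall P R,
  (R == [::]) && tree_of_weight n.+1 P + (if R is [:: r] then ncuts cuts n.+1 P r else 0) =
  tree_of_weight n.+1 P * (R == [::]) + (P == [::]) * tree_of_weight n.+1 R +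
  ((0 < size P) && (fweight P < n.+1)) * c n.+1 (fweight P) (size P) *
  tree_of_weight (n.+1 - fweight P) R.
Proof.
move=> closed_cuts binom P [|r [|r' R]] /=; rewrite ?muln1 ?muln0 ?addn0 ?add0n //.
rewrite closed_cuts //; case: P => [|t P] /=.
  by rewrite multichoosen0 muln1 mul1n mul0n addn0.
rewrite mul0n add0n; apply: addn_eq_split => [|eq_w]; first exact: tweight_gt0.
by rewrite -binom // -eq_w ?addKn // -[X in X < _]addn0 ltn_add2l tweight_gt0.
Qed.

Lemma ndelta_split cuts a c n : ndelta_closed cuts a n.+1 ->
  (forall k l, 0 < l -> k < n.+1 -> multichoose (a * (n.+1 - k)).+1 l = c n.+1 k l) ->
  forall P R, ndelta cuts n.+1 P R =
  (fweight P == n.+1) * (R == [::]) + (P == [::]) * (fweight R == n.+1) +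
  ((0 < size P) && (fweight P < n.+1)) * c n.+1 (fweight P) (size P) *
  (fweight R == n.+1 - fweight P).
Proof.
move=> closed_delta binom P R; rewrite closed_delta //.
case: P => [|t P] /=; first by rewrite multichoosen0 muln1 !mul0n mul1n add0n addn0.
rewrite mul0n addn0; case: R => [|r R] /=.
  rewrite addn0 muln0 multichoose1n !muln1; case: ltnP => [lt_w|]; last by rewrite mul0n addn0.
  by rewrite (_ : (0 == _) = false) ?muln0 ?addn0 // eq_sym subn_eq0 leqNgt lt_w.
rewrite muln0 add0n; apply: addn_eq_split => [|eq_w]; first by rewrite addn_gt0 tweight_gt0.
by rewrite -binom // -eq_w ?addKn // -[X in X < _]addn0 ltn_add2l addn_gt0 tweight_gt0.
Qed.

(** * Coefficients in H and H (x) H *)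

Section Coefficients.
Local Open Scope ring_scope.

Definition hcoef (x : hsum) (P : forest) : rat := \sum_(a <- x | a.2 == P) a.1.

Lemma hcoefE x P : hcoef x P = \sum_(a <- x) (if a.2 == P then a.1 else 0).
Proof. exact: big_mkcond. Qed.

Lemma tcoefE s P R :
  tcoef s P R = \sum_(e <- s) (if (e.1.2 == P) && (e.2 == R) then e.1.1 else 0).
Proof. exact: big_mkcond. Qed.

Lemma hcoef_flatten (I : Type) (f : I -> hsum) s P :
  hcoef (flatten (map f s)) P = \sum_(a <- s) hcoef (f a) P.
Proof. by rewrite /hcoef big_flatten big_map. Qed.

Lemma tcoef_flatten (I : Type) (f : I -> tsum) s P R :
  tcoef (flatten (map f s)) P R = \sum_(a <- s) tcoef (f a) P R.
Proof. by rewrite /tcoef big_flatten big_map. Qed.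

Lemma tcoef_cat s1 s2 P R : tcoef (s1 ++ s2) P R = tcoef s1 P R + tcoef s2 P R.
Proof. by rewrite /tcoef big_cat. Qed.

Lemma tcoef_tscale c s P R : tcoef (tscale c s) P R = c * tcoef s P R.
Proof.
rewrite !tcoefE big_map mulr_sumr; apply: eq_bigr => e _ /=.
by case: ifP; rewrite ?mulr0.
Qed.

Lemma tcoef_tens x y P R : tcoef (tens x y) P R = hcoef x P * hcoef y R.
Proof.
rewrite tcoefE !hcoefE big_flatten big_map mulr_suml; apply: eq_bigr => a _.
rewrite big_map mulr_sumr; apply: eq_bigr => b _ /=.
by case: (a.2 == P); case: (b.2 == R); rewrite ?mulr0 ?mul0r.
Qed.

Lemma hcoef_hone P : hcoef hone P = (P == [::])%:R.
Proof. by rewrite hcoefE big_seq1 eq_sym; case: (_ == _). Qed.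

Lemma hcoef_map1 (s : seq forest) P : hcoef [seq (1, F) | F <- s] P = (count_mem P s)%:R.
Proof. by rewrite hcoefE big_map count_memE natr_sum; apply: eq_bigr => F _ /=; case: eqP. Qed.

Lemma hcoef_uu n P : hcoef (uu n) P = (fweight P == n)%:R.
Proof. by rewrite hcoef_map1 count_mem_forests. Qed.

Lemma hcoef_vv n P : hcoef (vv n) P = (tree_of_weight n P)%:R.
Proof.
have -> : vv n = [seq (1, F) | F <- [seq [:: t] | t <- trees_of n]] by rewrite -map_comp.
rewrite hcoef_map1; case: P => [|t [|t' P]].
- by rewrite count_memE big_map big1.
- by rewrite count_mem_map_inj ?count_mem_trees // => ? ? [].
- by rewrite count_memE big_map big1 // => u _; rewrite eqseq_cons andbC.
Qed.

Lemma tcoef_delta_forests cuts (s : seq forest) P R :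
  tcoef (delta cuts [seq (1, F) | F <- s]) P R =
  (count_mem (P, R) (flatten [seq delta_forest cuts F | F <- s]))%:R.
Proof.
rewrite tcoefE big_flatten !big_map count_mem_flatten_map natr_sum; apply: eq_bigr => F _.
rewrite big_map count_memE natr_sum; apply: eq_bigr => -[Q S] _ /=.
by rewrite xpair_eqE; case: (Q == P); case: (S == R).
Qed.

Lemma tcoef_rdelta cuts x P R : tcoef (rdelta cuts x) P R =
  tcoef (delta cuts x) P R - hcoef x P * (R == [::])%:R - (P == [::])%:R * hcoef x R.
Proof. by rewrite !tcoef_cat !tcoef_tscale !tcoef_tens !hcoef_hone !mulN1r addrA. Qed.

Lemma hcoef_vv_hmul m x P : hcoef (hmul (vv m) x) P =
  if P is t :: P' then (tweight t == m)%:R * hcoef x P' else 0.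
Proof.
rewrite /hmul /vv -map_comp hcoef_flatten; case: P => [|t0 P].
  by rewrite big1 // => t _; rewrite hcoefE big_map big1.
rewrite -count_mem_trees count_memE natr_sum mulr_suml; apply: eq_bigr => t _.
rewrite hcoefE big_map hcoefE mulr_sumr; apply: eq_bigr => b _ /=.
by rewrite eqseq_cons mul1r; case: (t == t0); case: (b.2 == P); rewrite ?mul1r ?mul0r.
Qed.

Lemma hcoef_hprod_vv a P : hcoef (hprod (map vv a)) P = (map tweight P == a)%:R.
Proof.
elim: a P => [|m a IH] [|t P] //=; rewrite ?hcoef_hone ?hcoef_vv_hmul //.
by rewrite IH eqseq_cons -natrM mulnb.
Qed.

Lemma hcoef_comp_sum k l P :
  hcoef (comp_sum k l) P = ((size P == l) && (fweight P == k))%:R.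
Proof.
rewrite hcoef_flatten; under eq_bigr => a _ do rewrite hcoef_hprod_vv eq_sym.
rewrite -natr_sum -count_memE count_mem_comps size_map.
by rewrite all_map (introT allP) ?andbT // => t _; exact: tweight_gt0.
Qed.

Lemma tcoef_rhs c w n P R : tcoef (rhs c w n) P R =
  ((0 < size P) && (fweight P < n))%N%:R * (c n (fweight P) (size P))%:R *
  hcoef (w (n - fweight P)%N) R.
Proof.
pose X k := (c n k (size P))%:R * hcoef (w (n - k)%N) R.
transitivity (\sum_(k <- iota 1 (n - 1)%N)
                if k == fweight P then (if (1 <= size P < 1 + k)%N then X k else 0) else 0).
  rewrite tcoef_flatten; apply: eq_bigr => k _; rewrite tcoef_flatten.
  transitivity (\sum_(l <- iota 1 k)
                  if l == size P then (if k == fweight P then X k else 0) else 0).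
    apply: eq_bigr => l _; rewrite tcoef_tscale tcoef_tens hcoef_comp_sum /X.
    rewrite [size P == l]eq_sym [fweight P == k]eq_sym.
    by case: eqP => [->|_]; case: (k == fweight P); rewrite /= ?mul0r ?mulr0 ?mul1r.
  by rewrite sum_iota_pick; case: (k == fweight P); case: ifP.
rewrite sum_iota_pick /X; have le_sw := size_le_fweight P.
have [pos_s|] := ltnP 0 (size P); last by rewrite leqn0 => /eqP ->; rewrite !mul0r if_same.
rewrite (leq_trans pos_s le_sw) !add1n !ltnS le_sw /= -mulrA.
rewrite (_ : (fweight P <= n - 1)%N = (fweight P < n)%N); last by apply/idP/idP; lia.
by case: ifP; rewrite ?mul1r ?mul0r.
Qed.

Lemma tcoef_delta_vv cuts m P R : tcoef (delta cuts (vv m)) P R =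
  ((R == [::]) && tree_of_weight m P +
   (if R is [:: r] then ncuts cuts m P r else 0))%:R.
Proof.
have -> : vv m = [seq (1, F) | F <- [seq [:: t] | t <- trees_of m]] by rewrite -map_comp.
rewrite tcoef_delta_forests -map_comp -ncuts_tree_opts.
by congr (count_mem _ (flatten _))%:R; apply: eq_map => t /=; rewrite delta_forest1.
Qed.

Lemma tcoef_delta_uu cuts n P R : tcoef (delta cuts (uu n)) P R = (ndelta cuts n P R)%:R.
Proof. exact: tcoef_delta_forests. Qed.

Lemma rdelta_vv_closed cuts a c n : ncuts_closed cuts a n.+1 ->
  (forall k l, 0 < l -> k < n.+1 -> multichoose (a * (n.+1 - k)).-1 l = c n.+1 k l)%N ->
  teq (rdelta cuts (vv n.+1)) (rhs c vv n.+1).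
Proof.
move=> closed_cuts binom P R.
rewrite tcoef_rdelta tcoef_delta_vv tcoef_rhs !hcoef_vv (tree_opts_split closed_cuts binom).
by rewrite !natrD !natrM; ring.
Qed.

Lemma rdelta_uu_closed cuts a c n : ndelta_closed cuts a n.+1 ->
  (forall k l, 0 < l -> k < n.+1 -> multichoose (a * (n.+1 - k)).+1 l = c n.+1 k l)%N ->
  teq (rdelta cuts (uu n.+1)) (rhs c uu n.+1).
Proof.
move=> closed_delta binom P R.
rewrite tcoef_rdelta tcoef_delta_uu tcoef_rhs !hcoef_uu (ndelta_split closed_delta binom).
by rewrite !natrD !natrM; ring.
Qed.

End Coefficients.

Unset Implicit Arguments.

Theorem mainTheorem9 (n : nat) : (1 <= n)%N ->
  [/\ teq (rdelta cutsPR (vv n))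
          (rhs (fun n k l => 'C(2 * n - 2 * k + l - 2, l)) vv n),
      teq (rdelta cutsFr (vv n))
          (rhs (fun n k l => 'C(n - k + l - 2, l)) vv n),
      teq (rdelta cutsPR (uu n))
          (rhs (fun n k l => 'C(2 * n - 2 * k + l, l)) uu n)
    & teq (rdelta cutsFr (uu n))
          (rhs (fun n k l => 'C(n - k + l, l)) uu n)].
Proof.
case: n => // n _; split.
- apply: rdelta_vv_closed => [|k l _ lt_k]; first exact: ncutsPR_closed (@ndeltaPR_closed n).
  by rewrite /multichoose; congr 'C(_, _); lia.
- apply: rdelta_vv_closed => [|k l _ lt_k]; first exact: (ndeltaFr_closed n).2.
  by rewrite /multichoose; congr 'C(_, _); lia.
- apply: rdelta_uu_closed => [|k l _ lt_k]; first exact: (@ndeltaPR_closed n.+1).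
  by rewrite /multichoose; congr 'C(_, _); lia.
- apply: rdelta_uu_closed => [|k l _ lt_k]; first exact: (ndeltaFr_closed n.+1).1.
  by rewrite /multichoose; congr 'C(_, _); lia.
Qed.
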